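(* Let $r$, $s$, $c$ and $a_n$ be any integers and let $n$ be a positive integer, and assume $V_r\neq0$. Then \[ \sum_{a_{n-1}=c}^{a_n}\sum_{a_{n-2}=c}^{a_{n-1}}\cdots\sum_{a_0=c}^{a_1}\frac{(-1)^{a_0}W_{2ra_0+s}}{q^{ra_0}} =(-1)^{a_n}\frac{W_{r(2a_n+n)+s}}{q^{ra_n}V_r^n}+\frac{(-1)^c}{q^{r(c-1)}}\sum_{j=0}^{n-1}\frac{W_{r(n-j+2c-2)+s}}{V_r^{n-j}}\binom{a_n+j-c}{j}. \]
   Context: Let $a,b,p,q$ be complex numbers with $p\neq0$, $q\neq0$. The Horadam sequence $W_j=W_j(a,b;p,q)$ is defined by $W_0=a$, $W_1=b$, $W_j=pW_{j-1}-qW_{j-2}$ for $j\ge2$, and extended to negative indices by $W_{-m}=(pW_{-m+1}-W_{-m+2})/q$, so the recurrence holds for all integers. $V_j=W_j(2,p;p,q)$ is the Lucas sequence of the second kind. For integers $c,m$ and a function $f$ on the integers, $\sum_{k=c}^m f(k)$ denotes the usual sum if $m\ge c$, equals $0$ if $m=c-1$, and equals $-\sum_{k=m+1}^{c-1}f(k)$ if $m\le c-2$. The nested sum $\sum_{a_{n-1}=c}^{a_n}\cdots\sum_{a_0=c}^{a_1}g(a_0)$ is the iterated sum with $n$ summation signs: innermost over $a_0$ from $c$ to $a_1$, then $a_1$ from $c$ to $a_2$, ..., outermost $a_{n-1}$ from $c$ to $a_n$. For an integer $j\ge0$ and any number $y$, $\binom{y}{j}=y(y-1)\cdots(y-j+1)/j!$.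 *)

(* Complex numbers are modelled as R[i] = complex R for an
   arbitrary R : realType (every realType is a complete archimedean ordered
   field, i.e. a copy of the reals). *)
From mathcomp Require Import all_boot all_order all_algebra.
From mathcomp Require Export reals complex.
Set Implicit Arguments. Unset Strict Implicit. Unset Printing Implicit Defensive.
Import Order.TTheory GRing.Theory Num.Theory.
Local Open Scope ring_scope.

Section Horadam.
Variable F : fieldType.

(* forward pairs (W_n, W_{n+1}) for n >= 0 *)
Fixpoint Wfwd (a b p q : F) (n : nat) : F * F :=
  match n with
  | 0 => (a, b)
  | n'.+1 => let: (x, y) := Wfwd a b p q n' in (y, p * y - q * x)
  end.

(* backward pairs (W_{-n}, W_{-n+1}) for n >= 0, using
   W_{-m} = (p W_{-m+1} - W_{-m+2}) / q *)
Fixpoint Wbwd (a b p q : F) (n : nat) : F * F :=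
  match n with
  | 0 => (a, b)
  | n'.+1 => let: (x, y) := Wbwd a b p q n' in ((p * x - y) / q, x)
  end.

Definition W (a b p q : F) (j : int) : F :=
  match j with
  | Posz n => (Wfwd a b p q n).1
  | Negz n => (Wbwd a b p q n.+1).1   (* Negz n = -(n+1) *)
  end.

Definition V (p q : F) (j : int) : F := W 2 p p q j.

Definition gbinom (y : F) (j : nat) : F :=
  (\prod_(i < j) (y - i%:R)) / (j`!)%:R.
End Horadam.

(* Sum with the paper's convention for integer bounds:
   sum_{k=c}^m f k = usual sum if m >= c, 0 if m = c-1,
   and - sum_{k=m+1}^{c-1} f k if m <= c-2. *)
Definition gsum (G : zmodType) (c m : int) (f : int -> G) : G :=
  if (c <= m)%R then \sum_(i < absz (m - c + 1)%R) f (c + i%:Z)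
  else - \sum_(i < absz (c - m - 1)%R) f (m + 1 + i%:Z).

(* nested sum with n summation signs:
   nested n c g x = sum_{a_{n-1}=c}^{x} ... sum_{a_0=c}^{a_1} g a_0 *)
Fixpoint nested (G : zmodType) (n : nat) (c : int) (g : int -> G) : int -> G :=
  match n with
  | 0 => g
  | n'.+1 => fun x => gsum c x (nested n' c g)
  end.

From mathcomp Require Import all_boot all_order all_algebra.
From mathcomp Require Import reals complex.
From mathcomp Require Import ring zify.
Import Order.TTheory GRing.Theory Num.Theory.
Local Open Scope ring_scope.

(* Write g for the summand and R_n(k) for the right-hand side.  The nested sums
   N_n are characterised by N_0 = g, N_(n+1)(k) - N_(n+1)(k-1) = N_n(k) and
   N_(n+1)(c-1) = 0, since the signed sums telescope for all integer bounds.
   R_n satisfies the same three conditions.  For the leading term, the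
   difference reduces with m = r(2k+n)+s to W_(m+r) + q^r W_(m-r) = V_r W_m,
   which holds because both sides satisfy the Horadam recurrence in r and agree
   at r = 0, 1.  The binomial part telescopes by Pascal's rule, and at k = c-1
   only its j = 0 term survives, cancelling the leading term. *)

Section HoradamRecurrence.
Variables (F : fieldType) (p q : F).
Hypothesis q_neq0 : q != 0.

Definition horadam_rec (f : int -> F) := forall j, f (j + 2) = p * f (j + 1) - q * f j.

Lemma horadam_rec_uniq (f g : int -> F) :
  horadam_rec f -> horadam_rec g -> f 0 = g 0 -> f 1 = g 1 -> f =1 g.
Proof.
move=> recf recg eq0 eq1.
have fwd (n : nat) : f n = g n /\ f n.+1 = g n.+1.
  elim: n => [|n [eqn eqSn]] //; split=> //.
  rewrite (_ : Posz n.+2 = n%:Z + 2) ?recf ?recg; last lia.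
  by rewrite (_ : n%:Z + 1 = n.+1) ?eqn ?eqSn; last lia.
have bwd (n : nat) : f (- n%:Z) = g (- n%:Z) /\ f (1 - n%:Z) = g (1 - n%:Z).
  elim: n => [|n [eqn eqSn]] //; split; last first.
    by rewrite (_ : 1 - n.+1%:Z = - n%:Z); last lia.
  have rec_back h : horadam_rec h -> q * h (- n.+1%:Z) = p * h (- n%:Z) - h (1 - n%:Z).
    move/(_ (- n.+1%:Z)); rewrite (_ : - n.+1%:Z + 2 = 1 - n%:Z); last lia.
    by rewrite (_ : - n.+1%:Z + 1 = - n%:Z) => [->|]; [ring | lia].
  by apply: (mulfI q_neq0); rewrite !rec_back // eqn eqSn.
case=> n; first by case: (fwd n).
by rewrite NegzE; case: (bwd n.+1).
Qed.

Lemma horadam_recD (f g : int -> F) :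
  horadam_rec f -> horadam_rec g -> horadam_rec (fun j => f j + g j).
Proof. by move=> recf recg j; rewrite recf recg; ring. Qed.

Lemma horadam_recMr (f : int -> F) (x : F) :
  horadam_rec f -> horadam_rec (fun j => f j * x).
Proof. by move=> recf j; rewrite recf; ring. Qed.

Lemma horadam_rec_shift (f : int -> F) (m : int) :
  horadam_rec f -> horadam_rec (fun j => f (m + j)).
Proof. by move=> recf j /=; rewrite [m + (j + 2)]addrA [m + (j + 1)]addrA recf. Qed.

Lemma horadam_rec_reflect (f : int -> F) (m : int) :
  horadam_rec f -> horadam_rec (fun j => q ^ j * f (m - j)).
Proof.
move=> recf j /=; have := recf (m - (j + 2)).
rewrite (_ : m - (j + 2) + 2 = m - j); last lia.
rewrite (_ : m - (j + 2) + 1 = m - (j + 1)); last lia.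
have qS k : q ^ (k + 1) = q ^ k * q by rewrite expfzDr.
by rewrite (_ : j + 2 = j + 1 + 1) ?qS => [->|]; [ring | lia].
Qed.

Lemma Wfwd_W (a b : F) (n : nat) : Wfwd a b p q n = (W a b p q n, W a b p q n.+1).
Proof. by elim: n => [|n IH] //=; rewrite /W /= IH. Qed.

Lemma Wbwd_W (a b : F) (n : nat) :
  Wbwd a b p q n = (W a b p q (- n%:Z), W a b p q (1 - n%:Z)).
Proof.
elim: n => [|n IH] //=.
rewrite (_ : 1 - n.+1%:Z = - n%:Z); last lia.
by rewrite IH.
Qed.

Lemma W_rec (a b : F) : horadam_rec (W a b p q).
Proof.
case=> n.
  rewrite (_ : n%:Z + 2 = n.+2); last lia.
  rewrite (_ : n%:Z + 1 = n.+1); last lia.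
  by rewrite {1}/W /= Wfwd_W.
have -> : W a b p q (Negz n) = (p * W a b p q (- n%:Z) - W a b p q (1 - n%:Z)) / q.
  by rewrite /= Wbwd_W.
rewrite (_ : Negz n + 2 = 1 - n%:Z); last lia.
rewrite (_ : Negz n + 1 = - n%:Z); last lia.
by field.
Qed.

Lemma W_addV (a b : F) (r m : int) :
  W a b p q (m + r) + q ^ r * W a b p q (m - r) = V p q r * W a b p q m.
Proof.
move: r; apply: (horadam_rec_uniq
  (fun r => W a b p q (m + r) + q ^ r * W a b p q (m - r)) (fun r => V p q r * W a b p q m)).
- by apply: horadam_recD; [apply: horadam_rec_shift | apply: horadam_rec_reflect];
    apply: W_rec.
- exact/horadam_recMr/W_rec.
- by rewrite /= expr0z addr0; ring.
- have := W_rec a b (m - 1); rewrite subrK (_ : m - 1 + 2 = m + 1); last lia.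
  by rewrite /= expr1z => ->; ring.
Qed.
End HoradamRecurrence.

Section NestedSums.
Variable G : zmodType.

Lemma eq_gsum (c m : int) {f g : int -> G} : f =1 g -> gsum c m f = gsum c m g.
Proof.
by move=> eq_fg; rewrite /gsum; case: ifP => _; [|congr (- _)]; apply: eq_bigr.
Qed.

Lemma sum_ord_telescope (f : int -> G) (x : int) (N : nat) :
  \sum_(i < N) (f (x + i%:Z) - f (x + i%:Z - 1)) = f (x + N%:Z - 1) - f (x - 1).
Proof.
rewrite -(big_mkord xpredT (fun i : nat => f (x + i%:Z) - f (x + i%:Z - 1))).
rewrite (telescope_sumr_eq (fun i : nat => f (x + i%:Z - 1))) ?subr0 //.
by move=> k _; rewrite (_ : x + k.+1%:Z - 1 = x + k%:Z); last lia.
Qed.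

Lemma gsum_telescope (f : int -> G) (c m : int) :
  gsum c m (fun k => f k - f (k - 1)) = f m - f (c - 1).
Proof.
rewrite /gsum; case: ifP => le_cm.
  rewrite sum_ord_telescope gez0_abs; last lia.
  by rewrite (_ : c + (m - c + 1) - 1 = m); last lia.
rewrite sum_ord_telescope gez0_abs; last lia.
rewrite (_ : m + 1 + (c - m - 1) - 1 = c - 1); last lia.
by rewrite addrK opprB.
Qed.

Lemma nested_telescope (c : int) (g : int -> G) (P : nat -> int -> G) :
  P 0 =1 g -> (forall n, P n.+1 (c - 1) = 0) ->
  (forall n k, P n.+1 k - P n.+1 (k - 1) = P n k) ->
  forall n, nested n c g =1 P n.
Proof.
move=> P0 Pc PS; elim=> [|n IH] x /=; first by rewrite P0.
rewrite (eq_gsum c x IH) (eq_gsum c x (fun k => esym (PS n k))).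
by rewrite gsum_telescope Pc subr0.
Qed.
End NestedSums.

Section GeneralizedBinomial.
Variable F : fieldType.

Lemma gbinom0 (y : F) : gbinom y 0 = 1.
Proof. by rewrite /gbinom big_ord0 fact0 divr1. Qed.

Lemma gbinom_natr_eq0 (k j : nat) : (k < j)%N -> gbinom (k%:R : F) j = 0.
Proof.
move=> lt_kj; apply/eqP; rewrite /gbinom mulf_eq0; apply/orP; left.
by apply/prodf_eq0; exists (Ordinal lt_kj); rewrite //= subrr.
Qed.

Hypothesis F_char0 : [pchar F] =i pred0.

Lemma gbinomS (y : F) (j : nat) : gbinom (y + 1) j.+1 = gbinom y j.+1 + gbinom y j.
Proof.
have natr_eq0 (n : nat) : (n%:R == 0 :> F) = (n == 0)%N := (pcharf0P F).1 F_char0 n.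
have fact_neq0 : (j`!)%:R != 0 :> F by rewrite natr_eq0 -lt0n fact_gt0.
have jS_neq0 : (j.+1)%:R != 0 :> F by rewrite natr_eq0.
rewrite /gbinom big_ord_recl big_ord_recr /= factS natrM.
under eq_bigr do rewrite /bump /= add1n -natr1 opprD addrACA subrr addr0.
rewrite -natr1 in jS_neq0 *; field; exact/andP.
Qed.
End GeneralizedBinomial.

Lemma expN1zB1 (R : unitRingType) (k : int) : (-1 : R) ^ (k - 1) = - (-1) ^ k.
Proof. by rewrite exprzDr ?unitrN1 // exprN1 invrN1 mulrN1. Qed.

Section ClosedForm.
Variables (F : fieldType) (a b p q : F) (r s c : int).
Hypotheses (F_char0 : [pchar F] =i pred0) (q_neq0 : q != 0) (Vr_neq0 : V p q r != 0).

Definition horadam_summand (k : int) : F :=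
  (-1) ^ k * W a b p q (2 * r * k + s) / q ^ (r * k).

Definition leading_term (n : nat) (k : int) : F :=
  (-1) ^ k * W a b p q (r * (2 * k + n%:Z) + s) / (q ^ (r * k) * V p q r ^+ n).

Definition binomial_part (n : nat) (k : int) : F :=
  \sum_(j < n) W a b p q (r * (n%:Z - j%:Z + 2 * c - 2) + s) / V p q r ^+ (n - j)
               * gbinom (k + j%:Z - c)%:~R j.

Definition closed_form (n : nat) (k : int) : F :=
  leading_term n k + (-1) ^ c / q ^ (r * (c - 1)) * binomial_part n k.

Lemma leading_termB1 (n : nat) (k : int) :
  leading_term n.+1 k - leading_term n.+1 (k - 1) = leading_term n k.
Proof.
rewrite /leading_term expN1zB1.
set m := r * (2 * k + n%:Z) + s.
rewrite (_ : r * (2 * k + n.+1%:Z) + s = m + r); last by rewrite /m; lia.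
rewrite (_ : r * (2 * (k - 1) + n.+1%:Z) + s = m - r); last by rewrite /m; lia.
rewrite (_ : r * k = r * (k - 1) + r); last lia.
rewrite expfzDr //.
have qrk_neq0 : q ^ (r * (k - 1)) != 0 by apply: expfz_neq0.
have qr_neq0 : q ^ r != 0 by apply: expfz_neq0.
have Vn_neq0 : V p q r ^+ n != 0 by apply: expf_neq0.
have -> : W a b p q (m + r) = V p q r * W a b p q m - q ^ r * W a b p q (m - r).
  by rewrite -W_addV // addrK.
by rewrite exprSr; field; rewrite qrk_neq0 qr_neq0 Vn_neq0 Vr_neq0.
Qed.

Lemma binomial_partB1 (n : nat) (k : int) :
  binomial_part n.+1 k - binomial_part n.+1 (k - 1) = binomial_part n k.
Proof.
rewrite /binomial_part -sumrB big_ord_recl /= !gbinom0 subrr add0r.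
apply: eq_bigr => i _; rewrite -mulrBr /bump /= add1n subSS.
rewrite (_ : n.+1%:Z - i.+1%:Z = n%:Z - i%:Z); last lia.
rewrite (_ : k + i.+1%:Z - c = k - 1 + i.+1%:Z - c + 1); last lia.
rewrite (_ : k + i%:Z - c = k - 1 + i.+1%:Z - c); last lia.
by rewrite intrD gbinomS // [X in _ * X]addrC addKr.
Qed.

Lemma closed_formB1 (n : nat) (k : int) :
  closed_form n.+1 k - closed_form n.+1 (k - 1) = closed_form n k.
Proof. by rewrite /closed_form -(leading_termB1 n k) -(binomial_partB1 n k); ring. Qed.

Lemma closed_form_pred (n : nat) : closed_form n.+1 (c - 1) = 0.
Proof.
rewrite /closed_form /leading_term /binomial_part expN1zB1.
rewrite big_ord_recl /= gbinom0 subn0 big1 ?addr0; last first.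
  move=> i _; rewrite /bump /= add1n (_ : c - 1 + i.+1%:Z - c = i); last lia.
  by rewrite gbinom_natr_eq0 ?mulr0.
rewrite (_ : r * (n.+1%:Z + 2 * c - 2) + s = r * (2 * (c - 1) + n.+1%:Z) + s); last lia.
have qrc_neq0 : q ^ (r * (c - 1)) != 0 by apply: expfz_neq0.
have Vn_neq0 : V p q r ^+ n.+1 != 0 by apply: expf_neq0.
by field; rewrite qrc_neq0 Vn_neq0.
Qed.

Lemma closed_form0 : closed_form 0 =1 horadam_summand.
Proof.
move=> k; rewrite /closed_form /leading_term /binomial_part big_ord0 mulr0 addr0.
by rewrite expr0 mulr1 (_ : r * (2 * k + 0) + s = 2 * r * k + s); last lia.
Qed.

Lemma nested_horadam_summand (n : nat) : nested n c horadam_summand =1 closed_form n.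
Proof. exact: nested_telescope closed_form0 closed_form_pred closed_formB1 n. Qed.
End ClosedForm.

Theorem theorem4 (R : realType) (a b p q : R[i]) (r s c an : int) (n : nat) :
  p != 0 -> q != 0 -> (0 < n)%N -> V p q r != 0 ->
  nested n c (fun a0 : int => (-1) ^ a0 * W a b p q (2 * r * a0 + s) / q ^ (r * a0)) an
  = (-1) ^ an * W a b p q (r * (2 * an + n%:Z) + s) / (q ^ (r * an) * V p q r ^+ n)
    + (-1) ^ c / q ^ (r * (c - 1)) *
      \sum_(j < n) W a b p q (r * (n%:Z - j%:Z + 2 * c - 2) + s) / V p q r ^+ (n - j)
                   * gbinom (an + j%:Z - c)%:~R j.
Proof.
move=> _ q_neq0 _ Vr_neq0.
exact: nested_horadam_summand (pchar_num _) q_neq0 Vr_neq0 n an.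
Qed.
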